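(* Let $W$ be a weakly symmetric discrete memoryless channel with input alphabet $\mathbb{F}_q$, with uniformly distributed input. Let $x\in\mathbb{F}_q$ be the input symbol sent, let $y$ be the corresponding (random) output, and let $\pi=\pi_y$ be the APP vector. Then $$\mathbb{E}_y(\pi(x))=\mathbb{E}_y(\|\pi\|^2),\qquad\text{where }\|\pi\|^2=\sum_{\alpha\in\mathbb{F}_q}\pi(\alpha)^2.$$
   Context: A discrete memoryless channel with transition probabilities $W(y|x)$, $x\in\mathbb{F}_q$, $y\in\mathcal{Y}$ (finite), is weakly symmetric if $\mathcal{Y}$ admits a partition $Y_1\cup\dots\cup Y_r$ such that each submatrix $(W(y|x))_{x\in\mathbb{F}_q,y\in Y_i}$ has all its rows permutations of each other and all its columns permutations of each other. With uniform input, the APP vector of output $y$ is $\pi_y(\alpha)=\mathrm{prob}(x=\alpha\mid y)=W(y|\alpha)/\sum_\beta W(y|\beta)$. The expectation $\mathbb{E}_y$ is over $y$ distributed according to $W(\cdot|x)$. *)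

From HB Require Import structures.
From mathcomp Require Import all_boot all_order all_algebra all_field.
Set Implicit Arguments. Unset Strict Implicit. Unset Printing Implicit Defensive.
Import Order.TTheory GRing.Theory Num.Theory.
Local Open Scope ring_scope.

(* A DMC with input alphabet F (a finite field F_q), finite output alphabet Y,
   transition probabilities W x y = W(y|x), real values in a real field R. *)
Definition is_channel (R : realFieldType) (F : finFieldType) (Y : finType)
  (W : F -> Y -> R) : Prop :=
  (forall x y, 0 <= W x y) /\ (forall x, \sum_(y : Y) W x y = 1).

Definition weakly_symmetric (R : realFieldType) (F : finFieldType) (Y : finType)
  (W : F -> Y -> R) : Prop :=
  exists P : {set {set Y}}, partition P [set: Y] /\
    forall B, B \in P ->
      (forall x x' : F, perm_eq [seq W x y | y <- enum B] [seq W x' y | y <- enum B]) /\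
      (forall y y', y \in B -> y' \in B ->
         perm_eq [seq W a y | a <- enum F] [seq W a y' | a <- enum F]).

(* APP vector of output y under uniform input. *)
Definition app (R : realFieldType) (F : finFieldType) (Y : finType)
  (W : F -> Y -> R) (y : Y) (a : F) : R :=
  W a y / \sum_(b : F) W b y.

Definition Ey (R : realFieldType) (F : finFieldType) (Y : finType)
  (W : F -> Y -> R) (x : F) (f : Y -> R) : R :=
  \sum_(y : Y) W x y * f y.

From HB Require Import structures.
From mathcomp Require Import all_boot all_order all_algebra all_field.
From mathcomp Require Import ring.
Import Order.TTheory GRing.Theory Num.Theory.
Local Open Scope ring_scope.

(* Split the output alphabet into the blocks of the partition.  On a block B
   every row sums to the same T and every column to the same S, so counting
   the entries of the block twice gives |B| S = q T; the same holds for the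
   squared entries (|B| Q = q R).  Both sides of the identity restricted to B
   then equal R / S = T Q / S^2 = |B| R / (q T). *)

Lemma perm_eq_big_map (R : nmodType) (T : finType) (V : eqType) (A : {pred T})
    (f g : T -> V) (h : V -> R) :
  perm_eq [seq f y | y <- enum A] [seq g y | y <- enum A] ->
  \sum_(y in A) h (f y) = \sum_(y in A) h (g y).
Proof.
move=> pe; rewrite -!big_enum -(big_map f xpredT h) -(big_map g xpredT h).
exact: perm_big.
Qed.

Lemma double_count_mulrn (R : nmodType) (I J : finType) (B : {pred J})
    (M : I -> J -> R) (i0 : I) (j0 : J) :
  (forall i, \sum_(j in B) M i j = \sum_(j in B) M i0 j) ->
  (forall j, j \in B -> \sum_i M i j = \sum_i M i j0) ->
  (\sum_i M i j0) *+ #|B| = (\sum_(j in B) M i0 j) *+ #|I|.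
Proof.
move=> rows cols.
rewrite -sumr_const -[RHS]sumr_const.
transitivity (\sum_(j in B) \sum_i M i j); first by apply: eq_bigr => j /cols.
by rewrite exchange_big; apply: eq_bigr => i _; rewrite rows.
Qed.

Section SymmetricBlock.

Variables (R : realFieldType) (F : finFieldType) (Y : finType).
Variables (W : F -> Y -> R) (B : {set Y}).

Hypothesis rows_perm : forall x x' : F,
  perm_eq [seq W x y | y <- enum B] [seq W x' y | y <- enum B].
Hypothesis cols_perm : forall y y', y \in B -> y' \in B ->
  perm_eq [seq W a y | a <- enum F] [seq W a y' | a <- enum F].

Lemma block_col_sum (h : R -> R) (x : F) (y : Y) : y \in B ->
  \sum_a h (W a y) = #|F|%:R * (\sum_(y' in B) h (W x y')) / #|B|%:R.
Proof.
move=> yB; have nB : #|B|%:R != 0 :> R.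
  by rewrite pnatr_eq0 -lt0n; apply/card_gt0P; exists y.
apply: (mulIf nB); rewrite mulfVK // mulrC !mulr_natl.
apply: (@double_count_mulrn _ _ _ _ (fun a y => h (W a y))) => [a | y' y'B].
  exact: perm_eq_big_map.
have := @perm_eq_big_map _ _ _ _ _ _ h (cols_perm y' y y'B yB).
by rewrite -!big_enum.
Qed.

Lemma block_sum_app (x : F) :
  \sum_(y in B) W x y * app W y x =
  \sum_(y in B) W x y * \sum_a app W y a ^+ 2.
Proof.
pose n : R := #|B|%:R; pose q : R := #|F|%:R.
pose T := \sum_(y in B) W x y; pose Q := \sum_(y in B) W x y ^+ 2.
have colS y : y \in B -> \sum_a W a y = q * T / n by exact: (block_col_sum id).
have colQ y : y \in B -> \sum_a W a y ^+ 2 = q * Q / n.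
  exact: (block_col_sum (fun v => v ^+ 2)).
transitivity (Q / (q * T / n)).
  by rewrite mulr_suml; apply: eq_bigr => y yB; rewrite /app colS // mulrA expr2.
transitivity (T * ((q * Q / n) / (q * T / n) ^+ 2)); last first.
  rewrite mulr_suml; apply: eq_bigr => y yB; congr (_ * _).
  rewrite /app colS // -(colQ y yB) mulr_suml.
  by under [RHS]eq_bigr do rewrite expr_div_n.
have q0 : q != 0 by rewrite pnatr_eq0 -lt0n; apply/card_gt0P; exists x.
have [->|n0] := eqVneq n 0; first by rewrite !(invr0, mulr0, expr0n, mul0r).
have [->|T0] := eqVneq T 0; first by rewrite !(mulr0, mul0r, invr0).
by field; rewrite n0 q0 T0.
Qed.

End SymmetricBlock.

Theorem lemma1 (R : realFieldType) (F : finFieldType) (Y : finType)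
  (W : F -> Y -> R) (x : F) :
  is_channel W -> weakly_symmetric W ->
  Ey W x (fun y => app W y x) = Ey W x (fun y => \sum_(a : F) (app W y a) ^+ 2).
Proof.
move=> _ [P [/and3P [/eqP coverP trivP _] symP]].
have sum_blocks (f : Y -> R) : \sum_y f y = \sum_(B in P) \sum_(y in B) f y.
  by rewrite -big_trivIset // coverP; apply: eq_bigl => y; rewrite inE.
rewrite /Ey !sum_blocks; apply: eq_bigr => B /symP [rows cols].
exact: block_sum_app.
Qed.
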